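(* Let $\Gamma$ be a locally finite weighted graph and let $X$ be a finite subset of its vertex set. Then the following are equivalent: (1) $\Delta(\mathbb{R}^\Gamma_{\Gamma\setminus X})=\mathbb{R}^\Gamma$; (2) there is no non-zero finitely supported function on $\Gamma$ that is harmonic on $\Gamma\setminus X$.
   Context: Weighted graph: undirected, no loops or multiple edges, weights $\omega_{xy}=\omega_{yx}>0$, $\deg x=\sum_{y\sim x}\omega_{xy}$. Laplacian: $\Delta f(x)=f(x)-\frac{1}{\deg x}\sum_{y\sim x}\omega_{xy}f(y)$ for $f\in\mathbb{R}^\Gamma$. For a set $Y$ of vertices, $\mathbb{R}^\Gamma_Y$ denotes the space of functions $\Gamma\to\mathbb{R}$ supported on $Y$. A function is harmonic on $A$ if $\Delta f(x)=0$ for all $x\in A$. *)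

From HB Require Import structures.
From mathcomp Require Import all_boot all_order all_algebra.
From mathcomp Require Import reals.
Set Implicit Arguments. Unset Strict Implicit. Unset Printing Implicit Defensive.
Import Order.TTheory GRing.Theory Num.Theory.
Local Open Scope ring_scope.

(* A locally finite weighted graph on a (possibly infinite) vertex type V:
   each vertex x has a finite duplicate-free list of neighbours [nbrs x]
   (local finiteness), adjacency is symmetric and loop-free (no loops, no
   multiple edges), and each edge carries a symmetric positive weight.
   Values of [w] on non-edges are irrelevant. *)
Record wgraph (V : eqType) (R : realType) := WGraph {
  nbrs : V -> seq V;
  w : V -> V -> R;
  nbrs_uniq : forall x, uniq (nbrs x);
  nbrs_irr : forall x, x \notin nbrs x;
  nbrs_sym : forall x y, (y \in nbrs x) = (x \in nbrs y);
  w_sym : forall x y, w x y = w y x;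
  w_pos : forall x y, y \in nbrs x -> 0 < w x y
}.

Section Lap.
Variables (V : eqType) (R : realType) (G : wgraph V R).

Definition deg (x : V) : R := \sum_(y <- nbrs G x) w G x y.

Definition lap (f : V -> R) (x : V) : R :=
  f x - (deg x)^-1 * \sum_(y <- nbrs G x) w G x y * f y.

Definition harmonic_on (f : V -> R) (A : V -> bool) : Prop :=
  forall x, A x -> lap f x = 0.
End Lap.

(* f belongs to R^Gamma_Y: support of f contained in Y *)
Definition supported_on (V : Type) (R : realType) (f : V -> R) (Y : V -> bool) : Prop :=
  forall x, ~~ Y x -> f x = 0.

Definition fin_supp (V : eqType) (R : realType) (f : V -> R) : Prop :=
  exists s : seq V, forall x, f x != 0 -> x \in s.

From HB Require Import structures.
From mathcomp Require Import all_boot all_order all_algebra.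
From mathcomp Require Import reals boolp classical_sets functions.
Set Implicit Arguments.
Unset Strict Implicit.
Unset Printing Implicit Defensive.
Import Order.TTheory GRing.Theory Num.Theory.
Local Open Scope ring_scope.
Local Open Scope classical_set_scope.

(* (1) -> (2): the operator [symlap f = pdeg * lap G f] is symmetric, so pairing
   a finitely supported [h], harmonic off [X], with a solution of
   [lap G f = 1_{x0}] vanishing on [X] gives [h x0 * pdeg x0 = 0].
   (2) -> (1): [lap G f = g] with [f = 0] on [X] is a linear system in the
   values of [f] off [X], each equation involving finitely many unknowns.
   By symmetry, a vanishing combination [sum_y c_y * (equation y)] of left-hand
   sides makes [sum_y c_y 1_y] finitely supported and harmonic off [X], hence
   zero by (2); so the system is consistent, and a solution is read off a
   linear functional extending (by Zorn's lemma) the map sending each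
   equation to its right-hand side. *)

Section LinearExtension.
Variables (K : fieldType) (E : lmodType K).
Implicit Types (S : set (E * K)) (u v c : E) (a r s : K).

(* Partial linear functionals [E -> K] are handled through their graphs. *)
Definition linear_graph S :=
  forall a u r v s, S (u, r) -> S (v, s) -> S (a *: u + v, a * r + s).

Definition functional_graph S := forall r, S (0, r) -> r = 0.

Lemma linear_graph0 S u r : linear_graph S -> S (u, r) -> S (0, 0).
Proof.
by move=> lin ur; have := lin (-1) _ _ _ _ ur ur; rewrite scaleN1r mulN1r !addNr.
Qed.

Lemma linear_functional_graph_eq S u r s :
  linear_graph S -> functional_graph S -> S (u, r) -> S (u, s) -> r = s.
Proof.
move=> lin fun_S ur us; apply/eqP; rewrite eq_sym -subr_eq0; apply/eqP/fun_S.
by have := lin (-1) _ _ _ _ ur us; rewrite scaleN1r mulN1r addNr addrC.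
Qed.

Definition graph_extension S c : set (E * K) :=
  [set p | exists a u, S (u, p.2) /\ p.1 = a *: c + u].

Section GraphExtension.
Variables (S : set (E * K)) (c : E).
Hypotheses (lin : linear_graph S) (fun_S : functional_graph S).

Lemma sub_graph_extension : S `<=` graph_extension S c.
Proof. by case=> u r Sur; exists 0, u; rewrite scale0r add0r. Qed.

Lemma graph_extension_linear : linear_graph (graph_extension S c).
Proof.
move=> a _ r _ s [a1 [u1 [/= Sr ->]]] [a2 [u2 [/= Ss ->]]].
exists (a * a1 + a2), (a *: u1 + u2); split; first exact: lin.
by rewrite /= scalerDl scalerDr scalerA addrACA.
Qed.

Lemma graph_extension_functional :
  (forall r, ~ S (c, r)) -> functional_graph (graph_extension S c).
Proof.
move=> c_notin r [a [u [/= Sur c_u0]]].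
have [a0|a_neq0] := eqVneq a 0.
  by move: c_u0; rewrite a0 scale0r add0r => u0; apply: fun_S; rewrite u0.
have ac : a *: c = - u by apply/eqP; rewrite -addr_eq0 -c_u0.
case: (c_notin (- a^-1 * r + 0)).
have -> : c = - a^-1 *: u + 0 by rewrite addr0 -(scalerK a_neq0 c) ac scalerN scaleNr.
by apply: lin => //; apply: linear_graph0 Sur.
Qed.

Lemma graph_extension_new : S (0, 0) -> graph_extension S c (c, 0).
Proof. by move=> S00; exists 1, 0; rewrite scale1r addr0. Qed.

End GraphExtension.

Lemma chain_linear_graph S0 (F : set (set (E * K))) :
  linear_graph S0 -> functional_graph S0 ->
  (forall A, F A -> linear_graph (S0 `|` A) /\ functional_graph (S0 `|` A)) ->
  total_on F subset ->
  linear_graph (S0 `|` \bigcup_(A in F) A) /\ functional_graph (S0 `|` \bigcup_(A in F) A).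
Proof.
move=> lin0 fun0 FP Ftot; pose F0 := F `|` [set set0].
have F0P Z : F0 Z -> linear_graph (S0 `|` Z) /\ functional_graph (S0 `|` Z).
  by case=> [/FP //|->]; rewrite setU0.
have F0_sub Z : F0 Z -> S0 `|` Z `<=` S0 `|` \bigcup_(A in F) A.
  by case=> [FZ|->] p [S0p|Zp]; [left|right; exists Z|left|].
have F0_mem p : (S0 `|` \bigcup_(A in F) A) p -> exists2 Z, F0 Z & (S0 `|` Z) p.
  by case=> [S0p|[A FA Ap]]; [exists set0; [right|left] | exists A; [left|right]].
have F0_tot : total_on F0 subset.
  by move=> A B [FA|->] [FB|->]; [exact: Ftot | right | left | left]; exact: sub0set.
split.
  move=> a u r v s /F0_mem[Z1 F0Z1 Z1ur] /F0_mem[Z2 F0Z2 Z2vs].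
  have [Z1Z2|Z2Z1] := F0_tot _ _ F0Z1 F0Z2.
    by apply: (F0_sub _ F0Z2); apply: (F0P _ F0Z2).1 => //; move: Z1ur; apply: setUS.
  by apply: (F0_sub _ F0Z1); apply: (F0P _ F0Z1).1 => //; move: Z2vs; apply: setUS.
by move=> r /F0_mem[Z F0Z Zr]; apply: (F0P Z F0Z).2.
Qed.

(* Zorn's lemma is applied to the sets [A] such that [S0 `|` A] is a linear
   functional graph, so that the empty chain needs no special treatment. *)
Lemma maximal_linear_graph S0 :
  linear_graph S0 -> functional_graph S0 -> S0 (0, 0) ->
  exists S, [/\ S0 `<=` S, linear_graph S, functional_graph S
              & forall u, exists r, S (u, r)].
Proof.
move=> lin0 fun0 S00.
have [|A [[linA funA] maxA]] :=
  @Zorn_bigcup _ (fun A => linear_graph (S0 `|` A) /\ functional_graph (S0 `|` A)).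
  by move=> F FP; apply: chain_linear_graph.
exists (S0 `|` A); split => // c; apply: contrapT => c_dom.
have c_notin r : ~ (S0 `|` A) (c, r) by move=> h; apply: c_dom; exists r.
have S_ext := @sub_graph_extension (S0 `|` A) c.
apply: (maxA (graph_extension (S0 `|` A) c)).
  split; first by move=> p Ap; apply: S_ext; right.
  move=> /(_ (c, 0)) ext_A; apply: (c_notin 0); right; apply: ext_A.
  by apply: graph_extension_new; left.
rewrite setUidr; last by move=> p S0p; apply: S_ext; left.
split; first exact: graph_extension_linear.
exact: graph_extension_functional.
Qed.

Section Span.
Variables (I : Type) (b : I -> E) (t : I -> K).

Definition span_graph : set (E * K) :=
  range (fun l : seq (I * K) =>
           (\sum_(p <- l) p.2 *: b p.1, \sum_(p <- l) p.2 * t p.1)).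

Lemma span_graph_linear : linear_graph span_graph.
Proof.
move=> a _ _ _ _ [l1 _ [<- <-]] [l2 _ [<- <-]].
exists ([seq (p.1, a * p.2) | p <- l1] ++ l2) => //.
rewrite !big_cat !big_map /= scaler_sumr mulr_sumr.
by congr (_ + _, _ + _); apply: eq_bigr => p _; rewrite ?scalerA ?mulrA.
Qed.

Theorem linear_extension :
  (forall l : seq (I * K), \sum_(p <- l) p.2 *: b p.1 = 0 ->
                           \sum_(p <- l) p.2 * t p.1 = 0) ->
  exists psi : {linear E -> K^o}, forall i, psi (b i) = t i.
Proof.
move=> consistent.
have span0 : span_graph (0, 0) by exists [::]; rewrite ?big_nil.
have span_fun : functional_graph span_graph.
  by move=> r [l _ [/consistent lt0 <-]].
have [S [spanS linS funS domS]] :=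
  maximal_linear_graph span_graph_linear span_fun span0.
have [psi psiS] := choice domS.
have psi_lin a u v : psi (a *: u + v) = a * psi u + psi v.
  by apply: (linear_functional_graph_eq linS funS (psiS _)); apply: linS.
pose Psi : {linear E -> K^o} :=
  HB.pack psi (GRing.isLinear.Build K E K^o *%R psi psi_lin).
exists Psi => i /=.
apply: (linear_functional_graph_eq linS funS (psiS _)); apply: spanS.
by exists [:: (i, 1)] => //; rewrite !big_seq1 scale1r mul1r.
Qed.

End Span.
End LinearExtension.

Lemma big_delta (T : eqType) (R : ringType) (r : seq T) (F : T -> R) y :
  uniq r -> \sum_(x <- r) F x * (x == y)%:R = (y \in r)%:R * F y.
Proof.
move=> r_uniq; have [yr|yNr] := boolP (y \in r).
  rewrite (bigD1_seq y) //= eqxx mulr1 mul1r big1 ?addr0 // => x /negbTE ->.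
  by rewrite mulr0.
rewrite mul0r big1_seq // => x /= xr; rewrite (_ : (x == y) = false) ?mulr0 //.
by apply: contraNF yNr => /eqP <-.
Qed.

Section Graph.
Variables (V : eqType) (R : realType) (G : wgraph V R).

(* [deg x] with the value 0 at isolated vertices replaced by 1; there
   [lap G f x = f x], as [0^-1 = 0]. *)
Definition pdeg x : R := if deg G x == 0 then 1 else deg G x.

Definition symlap (f : V -> R) x :=
  pdeg x * f x - \sum_(y <- nbrs G x) w G x y * f y.

Lemma pdeg_neq0 x : pdeg x != 0.
Proof. by rewrite /pdeg; case: ifP => [_|/negbT //]; apply: oner_neq0. Qed.

Lemma deg_eq0_nbrs x : deg G x = 0 -> nbrs G x = [::].
Proof.
rewrite /deg; case nx: (nbrs G x) => [|y s] //; rewrite big_cons => deg0.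
have wy : 0 < w G x y by apply: w_pos; rewrite nx mem_head.
have ws : 0 <= \sum_(z <- s) w G x z.
  by rewrite big_seq sumr_ge0 // => z zs; rewrite ltW // w_pos // nx inE zs orbT.
by have := ltr_wpDr ws wy; rewrite deg0 ltxx.
Qed.

Lemma symlapE f x : symlap f x = pdeg x * lap G f x.
Proof.
rewrite /symlap /lap /pdeg; case: eqP => [deg0|/eqP deg_neq0].
  by rewrite (deg_eq0_nbrs deg0) !big_nil mulr0 !subr0 !mul1r.
by rewrite mulrBr mulrA mulfV // mul1r.
Qed.

Lemma symlap_sum (I : Type) (r : seq I) (c : I -> R) (F : I -> V -> R) x :
  symlap (fun y => \sum_(i <- r) c i * F i y) x
  = \sum_(i <- r) c i * symlap (F i) x.
Proof.
rewrite /symlap.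
have -> : \sum_(y <- nbrs G x) w G x y * \sum_(i <- r) c i * F i y
          = \sum_(i <- r) c i * \sum_(y <- nbrs G x) w G x y * F i y.
  under eq_bigr do rewrite mulr_sumr; rewrite exchange_big /=.
  by apply: eq_bigr => i _; rewrite mulr_sumr; apply: eq_bigr => y _; rewrite mulrCA.
by rewrite mulr_sumr -sumrB; apply: eq_bigr => i _; rewrite mulrBr mulrCA.
Qed.

Lemma big_nbrs_restrict (T : seq V) x (F : V -> R) : uniq T ->
  (forall y, y \in nbrs G x -> F y != 0 -> y \in T) ->
  \sum_(y <- nbrs G x) F y = \sum_(y <- T | y \in nbrs G x) F y.
Proof.
move=> T_uniq FT; transitivity (\sum_(y <- nbrs G x | y \in T) F y).
  by rewrite [RHS]big_rmcond_in // => y yx; apply: contraNeq; apply: FT.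
have perm : perm_eq [seq y <- nbrs G x | y \in T] [seq y <- T | y \in nbrs G x].
  apply: uniq_perm; rewrite ?filter_uniq ?nbrs_uniq // => y.
  by rewrite !mem_filter andbC.
by rewrite -[LHS]big_filter -[RHS]big_filter (perm_big _ perm).
Qed.

Lemma sum_nbrs_swap (T : seq V) (F : V -> V -> R) : uniq T ->
  (forall x y, F x y != 0 -> {subset x :: nbrs G x <= T}) ->
  \sum_(x <- T) \sum_(y <- nbrs G x) w G x y * F x y
  = \sum_(x <- T) \sum_(y <- nbrs G x) w G x y * F y x.
Proof.
move=> T_uniq FT.
have FxyT x y : y \in nbrs G x -> w G x y * F x y != 0 -> y \in T.
  by move=> yx; rewrite mulf_eq0 negb_or => /andP[_ /FT]; apply; rewrite inE yx orbT.
have FyxT x y : y \in nbrs G x -> w G x y * F y x != 0 -> y \in T.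
  by move=> _; rewrite mulf_eq0 negb_or => /andP[_ /FT]; apply; apply: mem_head.
under eq_bigr => x _ do rewrite (big_nbrs_restrict T_uniq (FxyT x)) big_mkcond.
under [RHS]eq_bigr => x _ do rewrite (big_nbrs_restrict T_uniq (FyxT x)) big_mkcond.
rewrite [RHS]exchange_big /=; apply: eq_bigr => x _; apply: eq_bigr => y _.
by rewrite nbrs_sym w_sym.
Qed.

Lemma symlap_sym (T : seq V) (h f : V -> R) : uniq T ->
  (forall x, h x != 0 -> {subset x :: nbrs G x <= T}) ->
  \sum_(x <- T) h x * symlap f x = \sum_(x <- T) f x * symlap h x.
Proof.
move=> T_uniq hT; rewrite /symlap.
under eq_bigr do rewrite mulrBr mulr_sumr.
under [RHS]eq_bigr do rewrite mulrBr mulr_sumr.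
rewrite !sumrB; congr (_ - _).
  by apply: eq_bigr => x _; rewrite mulrCA [RHS]mulrCA [f x * _]mulrC.
under eq_bigr do under eq_bigr do rewrite mulrCA.
under [RHS]eq_bigr do under eq_bigr do rewrite mulrCA [f _ * _]mulrC.
apply: (@sum_nbrs_swap _ (fun x y => h x * f y)) => // x y.
by rewrite mulf_eq0 negb_or => /andP[/hT].
Qed.

Section Dirichlet.
Variable X : seq V.

Lemma solvable_no_harmonic :
  (forall g : V -> R, exists f : V -> R,
      supported_on f (fun x => x \notin X) /\ forall x, lap G f x = g x) ->
  ~ (exists f : V -> R, [/\ fin_supp f, exists x, f x != 0
                          & harmonic_on G f (fun x => x \notin X)]).
Proof.
move=> solvable [h [[s hs] [x0 hx0] harm_h]].
have [f [supp_f lap_f]] := solvable (fun x => (x == x0)%:R).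
pose T := undup (s ++ flatten [seq nbrs G x | x <- s]).
have hT x : h x != 0 -> {subset x :: nbrs G x <= T}.
  move=> /hs xs y; rewrite inE mem_undup mem_cat => /predU1P[->|yx]; first by rewrite xs.
  by apply/orP; right; apply/flatten_mapP; exists x.
have x0T : x0 \in T by apply: (hT x0 hx0); apply: mem_head.
have lhs : \sum_(x <- T) h x * symlap f x = h x0 * pdeg x0.
  rewrite (bigD1_seq x0) ?undup_uniq //= big1 => [|x /negbTE x_x0].
    by rewrite symlapE lap_f eqxx mulr1 addr0 mulrC.
  by rewrite symlapE lap_f x_x0 !mulr0.
have rhs : \sum_(x <- T) f x * symlap h x = 0.
  apply: big1 => x _; have [xX|xNX] := boolP (x \in X).
    by rewrite supp_f ?negbK // mul0r.
  by rewrite symlapE harm_h // !mulr0.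
have := symlap_sym f (undup_uniq _) hT; rewrite lhs rhs => /eqP.
by rewrite mulf_eq0 (negbTE hx0) (negbTE (pdeg_neq0 x0)).
Qed.

Definition delta_off (y : V) : V -> R^o := fun x => ((x == y) && (x \notin X))%:R.

(* [eqn_row y x] is the coefficient of the unknown [f x] in the equation
   [symlap f y = pdeg y * g y]. *)
Definition eqn_row (y : V) : V -> R^o :=
  pdeg y *: delta_off y - \sum_(z <- nbrs G y) w G y z *: delta_off z.

Lemma eqn_rowE y x : x \notin X -> eqn_row y x = symlap (fun z => (z == y)%:R) x.
Proof.
move=> xNX; have -> : eqn_row y x
    = pdeg y * delta_off y x - \sum_(z <- nbrs G y) w G y z * delta_off z x.
  by rewrite /eqn_row fct_sumE; reflexivity.
rewrite /symlap /delta_off xNX andbT.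
under eq_bigr do rewrite andbT eq_sym.
rewrite !big_delta ?nbrs_uniq //; have [->|xy] := eqVneq x y.
  by rewrite (negbTE (nbrs_irr G y)).
by rewrite nbrs_sym w_sym !mulr0.
Qed.

Hypothesis no_harmonic :
  ~ (exists f : V -> R, [/\ fin_supp f, exists x, f x != 0
                          & harmonic_on G f (fun x => x \notin X)]).

Lemma eqn_row_consistent (t : V -> R) (l : seq (V * R)) :
  \sum_(p <- l) p.2 *: eqn_row p.1 = 0 -> \sum_(p <- l) p.2 * t p.1 = 0.
Proof.
move=> rows0; pose h x := \sum_(p <- l) p.2 * (x == p.1)%:R.
have symlap_h x : x \notin X -> symlap h x = 0.
  move=> xNX; rewrite (symlap_sum l (fun p => p.2) (fun p z => (z == p.1)%:R)).
  have rows0x : \sum_(p <- l) p.2 * eqn_row p.1 x = 0.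
    by move/(congr1 (fun u => u x)): rows0; rewrite fct_sumE => rows0x; exact: rows0x.
  by apply: etrans rows0x; apply: eq_bigr => p _; rewrite eqn_rowE.
have h0 x : h x = 0.
  apply/eqP; apply: contraT => hx; case: no_harmonic; exists h; split.
  - exists [seq p.1 | p <- l] => y; apply: contraR => yNl.
    rewrite /h big1_seq // => p /andP[_ pl]; rewrite (_ : (y == p.1) = false) ?mulr0 //.
    by apply: contraNF yNl => /eqP ->; apply: map_f.
  - by exists x.
  - move=> y yNX; have := symlap_h y yNX; rewrite symlapE => /eqP.
    by rewrite mulf_eq0 (negbTE (pdeg_neq0 y)) => /eqP.
transitivity (\sum_(x <- undup [seq p.1 | p <- l]) h x * t x); last first.
  by rewrite big1 // => x _; rewrite h0 mul0r.
rewrite /h; under [RHS]eq_bigr do rewrite mulr_suml.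
rewrite exchange_big; apply: eq_big_seq => p pl /=.
under eq_bigr do rewrite -mulrA [_%:R * _]mulrC.
by rewrite -mulr_sumr big_delta ?undup_uniq // mem_undup map_f // mul1r.
Qed.

Lemma no_harmonic_solvable (g : V -> R) : exists f : V -> R,
  supported_on f (fun x => x \notin X) /\ forall x, lap G f x = g x.
Proof.
have [psi psi_row] :=
  linear_extension (eqn_row_consistent (fun y => pdeg y * g y)).
exists (fun x => psi (delta_off x)); split.
  move=> x; rewrite negbK => xX; rewrite -(linear0 psi); congr (psi _).
  by apply/funext => y; rewrite /delta_off; case: eqVneq => [->|]; rewrite ?xX.
move=> y; apply: (mulfI (pdeg_neq0 y)); rewrite -symlapE -psi_row.
rewrite /eqn_row linearB linearZ linear_sum /symlap /=; congr (_ - _).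
by apply: eq_bigr => z _; rewrite linearZ.
Qed.

End Dirichlet.
End Graph.

Theorem lemma5p2 (V : eqType) (R : realType) (G : wgraph V R) (X : seq V) :
  (forall g : V -> R, exists f : V -> R,
      supported_on f (fun x => x \notin X) /\ forall x, lap G f x = g x)
  <->
  ~ (exists f : V -> R, [/\ fin_supp f, exists x, f x != 0
                          & harmonic_on G f (fun x => x \notin X)]).
Proof.
split; first exact: solvable_no_harmonic.
by move=> no_harmonic g; apply: no_harmonic_solvable.
Qed.
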